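(* Let $\mathcal M$ be a symmetric monoidal category and let $\pi_{\mathcal M}\colon\mathcal M\to P(\mathcal M)$ be the functor described in the context. Then a morphism $[A,f]\colon X\to Y$ of $P(\mathcal M)$ is an isomorphism in $P(\mathcal M)$ if and only if $f$ is an isomorphism in $\mathcal M$. In particular, $\pi_{\mathcal M}$ reflects isomorphisms.
   Context: Let $(\mathcal M,\otimes,I,a,\ell,r)$ be a symmetric monoidal category (associator $a$, left unitor $\ell$, right unitor $r$, symmetry $b$). An object $A$ is weakly invertible if there is $B$ with $A\otimes B\cong B\otimes A\cong I$. The category $P(\mathcal M)$ is defined as follows: its objects are those of $\mathcal M$; a morphism $X\to Y$ is an equivalence class $[A,f]$ of pairs $(A,f)$ with $A$ a weakly invertible object of $\mathcal M$ and $f\colon X\to Y\otimes A$ a morphism of $\mathcal M$, where $(A,f)$ and $(A',f')$ are equivalent iff there is an isomorphism $\alpha\colon A\to A'$ in $\mathcal M$ with $(Y\otimes\alpha)\circ f=f'$. The composite of $[A,f]\colon X\to Y$ and $[B,g]\colon Y\to Z$ is $[B\otimes A,\ a_{Z,B,A}\circ(g\otimes A)\circ f]$, and the identity on $X$ is $[I,r_X^{-1}]$. The functor $\pi_{\mathcal M}\colon\mathcal M\to P(\mathcal M)$ is the identity on objects and sends $f\colon X\to Y$ to $[I,\ r_Y^{-1}\circ f]$. *)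

Set Implicit Arguments.
Unset Strict Implicit.

Record SymMonCat := {
  obj :> Type;
  hom : obj -> obj -> Type;
  comp : forall X Y Z : obj, hom Y Z -> hom X Y -> hom X Z;
  idm : forall X : obj, hom X X;
  comp_id_l : forall X Y (f : hom X Y), comp (idm Y) f = f;
  comp_id_r : forall X Y (f : hom X Y), comp f (idm X) = f;
  comp_assoc : forall X Y Z W (f : hom X Y) (g : hom Y Z) (h : hom Z W),
      comp h (comp g f) = comp (comp h g) f;
  tens : obj -> obj -> obj;
  tensm : forall X X' Y Y', hom X X' -> hom Y Y' -> hom (tens X Y) (tens X' Y');
  tens_id : forall X Y, tensm (idm X) (idm Y) = idm (tens X Y);
  tens_comp : forall X X' X'' Y Y' Y'' (f : hom X X') (f' : hom X' X'')
      (g : hom Y Y') (g' : hom Y' Y''),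
      tensm (comp f' f) (comp g' g) = comp (tensm f' g') (tensm f g);
  unit : obj;
  assoc : forall X Y Z, hom (tens (tens X Y) Z) (tens X (tens Y Z));
  assoc_inv : forall X Y Z, hom (tens X (tens Y Z)) (tens (tens X Y) Z);
  assoc_inv_l : forall X Y Z, comp (assoc_inv X Y Z) (assoc X Y Z) = idm _;
  assoc_inv_r : forall X Y Z, comp (assoc X Y Z) (assoc_inv X Y Z) = idm _;
  assoc_nat : forall X X' Y Y' Z Z' (f : hom X X') (g : hom Y Y') (h : hom Z Z'),
      comp (assoc X' Y' Z') (tensm (tensm f g) h)
      = comp (tensm f (tensm g h)) (assoc X Y Z);
  lunit : forall X, hom (tens unit X) X;
  lunit_inv : forall X, hom X (tens unit X);
  lunit_inv_l : forall X, comp (lunit_inv X) (lunit X) = idm _;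
  lunit_inv_r : forall X, comp (lunit X) (lunit_inv X) = idm _;
  lunit_nat : forall X Y (f : hom X Y),
      comp (lunit Y) (tensm (idm unit) f) = comp f (lunit X);
  runit : forall X, hom (tens X unit) X;
  runit_inv : forall X, hom X (tens X unit);
  runit_inv_l : forall X, comp (runit_inv X) (runit X) = idm _;
  runit_inv_r : forall X, comp (runit X) (runit_inv X) = idm _;
  runit_nat : forall X Y (f : hom X Y),
      comp (runit Y) (tensm f (idm unit)) = comp f (runit X);
  braid : forall X Y, hom (tens X Y) (tens Y X);
  braid_nat : forall X X' Y Y' (f : hom X X') (g : hom Y Y'),
      comp (braid X' Y') (tensm f g) = comp (tensm g f) (braid X Y);
  braid_sym : forall X Y, comp (braid Y X) (braid X Y) = idm (tens X Y);
  pentagon : forall W X Y Z,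
      comp (assoc W X (tens Y Z)) (assoc (tens W X) Y Z)
      = comp (tensm (idm W) (assoc X Y Z))
             (comp (assoc W (tens X Y) Z) (tensm (assoc W X Y) (idm Z)));
  triangle : forall X Y,
      comp (tensm (idm X) (lunit Y)) (assoc X unit Y) = tensm (runit X) (idm Y);
  hexagon : forall X Y Z,
      comp (assoc Y Z X) (comp (braid X (tens Y Z)) (assoc X Y Z))
      = comp (tensm (idm Y) (braid X Z))
             (comp (assoc Y X Z) (tensm (braid X Y) (idm Z)))
}.

Arguments hom {s}.
Arguments comp {s X Y Z}.
Arguments idm {s}.
Arguments tens {s}.
Arguments tensm {s X X' Y Y'}.
Arguments unit {s}.
Arguments assoc {s}.
Arguments runit {s}.
Arguments runit_inv {s}.

Section P.
Variable M : SymMonCat.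

Definition is_iso {X Y : M} (f : hom X Y) : Prop :=
  exists g : hom Y X, comp g f = idm X /\ comp f g = idm Y.

Definition weakly_invertible (A : M) : Prop :=
  exists (B : M) (u : hom (tens A B) unit) (v : hom (tens B A) unit),
    is_iso u /\ is_iso v.

(* Representatives (A, f) of morphisms X -> Y of P(M): f : X -> Y⊗A.
   Equivalence: (A,f) ~ (A',f') iff there is an iso α : A -> A' with
   (Y⊗α)∘f = f'. *)
Definition Pequiv {X Y : M} (A : M) (f : hom X (tens Y A))
    (A' : M) (f' : hom X (tens Y A')) : Prop :=
  exists alpha : hom A A', is_iso alpha /\ comp (tensm (idm Y) alpha) f = f'.

Definition Pcomp {X Y Z : M} (A : M) (f : hom X (tens Y A))
    (B : M) (g : hom Y (tens Z B)) : hom X (tens Z (tens B A)) :=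
  comp (assoc Z B A) (comp (tensm g (idm A)) f).

Definition Pid (X : M) : hom X (tens X unit) := runit_inv X.

Definition P_is_iso {X Y : M} (A : M) (f : hom X (tens Y A)) : Prop :=
  exists (B : M) (g : hom Y (tens X B)),
    weakly_invertible B /\
    Pequiv (Pcomp f g) (Pid X) /\
    Pequiv (Pcomp g f) (Pid Y).

Definition pi_mor {X Y : M} (f : hom X Y) : hom X (tens Y unit) :=
  comp (runit_inv Y) f.

End P.

Arguments is_iso {M X Y}.
Arguments weakly_invertible {M}.
Arguments Pequiv {M X Y A} f {A'} f'.
Arguments Pcomp {M X Y Z A} f {B} g.
Arguments Pid {M}.
Arguments P_is_iso {M X Y A} f.
Arguments pi_mor {M X Y}.


(* If [[B, g]] is inverse to [[A, f]] in P(M), the two composites being equivalent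
   to identities give isomorphisms [s], [t] with [s ∘ (g ⊗ A) ∘ f = id] and
   [t ∘ (f ⊗ B) ∘ g = id]; so [s ∘ (g ⊗ A)] is a retraction of [f] that is itself
   split mono, and [f] is invertible.
   Conversely, if [f] is invertible and [u : A ⊗ B ≅ I], then
   [[B, (f⁻¹ ⊗ B) ∘ a⁻¹ ∘ (Y ⊗ u⁻¹) ∘ r⁻¹]] is inverse to [[A, f]]: [u] witnesses
   one of the two equivalences; for the other, the required isomorphism
   [B ⊗ A ≅ I] exists because [A ⊗ -] is full when [A] is weakly invertible, and
   checking it reduces to the pentagon and triangle axioms. *)

Section SymMonCatFacts.
Context {M : SymMonCat}.

Local Notation "g ∘ f" := (comp g f) (at level 45, right associativity).
Local Notation "f ⊗ g" := (tensm f g) (at level 35).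

Lemma reassoc {X Y Z V : M} {x : hom Y Z} {y : hom X Y} {z : hom X Z}
  (E : x ∘ y = z) (k : hom V X) : x ∘ y ∘ k = z ∘ k.
Proof. rewrite !comp_assoc, E. reflexivity. Qed.

Lemma id_reassoc {X Y V : M} {x : hom Y X} {y : hom X Y}
  (E : x ∘ y = idm X) (k : hom V X) : x ∘ y ∘ k = k.
Proof. rewrite comp_assoc, E, comp_id_l. reflexivity. Qed.

Lemma tens_comp_l {X X' X'' : M} (Z : M) (f : hom X X') (f' : hom X' X'') :
  (f' ∘ f) ⊗ idm Z = (f' ⊗ idm Z) ∘ (f ⊗ idm Z).
Proof. rewrite <- tens_comp, comp_id_l. reflexivity. Qed.

Lemma tens_comp_r {X X' X'' : M} (Z : M) (f : hom X X') (f' : hom X' X'') :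
  idm Z ⊗ (f' ∘ f) = (idm Z ⊗ f') ∘ (idm Z ⊗ f).
Proof. rewrite <- tens_comp, comp_id_l. reflexivity. Qed.

Lemma tens_interchange {X X' Y Y' : M} (f : hom X X') (g : hom Y Y') :
  (idm X' ⊗ g) ∘ (f ⊗ idm Y) = (f ⊗ idm Y') ∘ (idm X ⊗ g).
Proof. rewrite <- !tens_comp, !comp_id_l, !comp_id_r. reflexivity. Qed.

Lemma tens_inv {X X' Y Y' : M}
  {f : hom X X'} {g : hom X' X} {f' : hom Y Y'} {g' : hom Y' Y} :
  g ∘ f = idm X -> g' ∘ f' = idm Y -> (g ⊗ g') ∘ (f ⊗ f') = idm (tens X Y).
Proof. intros E E'. rewrite <- tens_comp, E, E', tens_id. reflexivity. Qed.

Lemma tens_id_inv {X X' Y : M} {f : hom X X'} {g : hom X' X} :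
  g ∘ f = idm X -> (g ⊗ idm Y) ∘ (f ⊗ idm Y) = idm (tens X Y).
Proof. intro E. apply tens_inv; [exact E | apply comp_id_l]. Qed.

Lemma id_tens_inv {X Y Y' : M} {f : hom Y Y'} {g : hom Y' Y} :
  g ∘ f = idm Y -> (idm X ⊗ g) ∘ (idm X ⊗ f) = idm (tens X Y).
Proof. intro E. apply tens_inv; [apply comp_id_l | exact E]. Qed.

Lemma left_inv_eq_right_inv {X Y : M} {x : hom X Y} {x' y : hom Y X} :
  x' ∘ x = idm X -> x ∘ y = idm Y -> y = x'.
Proof.
  intros H1 H2. rewrite <- (comp_id_l y), <- H1, <- comp_assoc, H2, comp_id_r.
  reflexivity.
Qed.

Lemma square_inv {X Y Z W : M} {p : hom Y W} {p' : hom W Y} {q : hom X Z} {q' : hom Z X}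
  {x : hom X Y} {y : hom Z W} :
  p' ∘ p = idm Y -> q ∘ q' = idm Z -> p ∘ x = y ∘ q -> x ∘ q' = p' ∘ y.
Proof.
  intros Hp Hq E. rewrite <- (id_reassoc Hp x), E, <- !comp_assoc, Hq, comp_id_r.
  reflexivity.
Qed.

Definition split_mono {X Y : M} (f : hom X Y) : Prop := exists g : hom Y X, g ∘ f = idm X.

Lemma is_iso_idm (X : M) : is_iso (idm X).
Proof. exists (idm X). rewrite comp_id_l. split; reflexivity. Qed.

Lemma is_iso_comp {X Y Z : M} {f : hom X Y} {g : hom Y Z} :
  is_iso f -> is_iso g -> is_iso (g ∘ f).
Proof.
  intros [f' [Hf1 Hf2]] [g' [Hg1 Hg2]]. exists (f' ∘ g').
  rewrite <- !comp_assoc, (id_reassoc Hg1), (id_reassoc Hf2). split; assumption.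
Qed.

Lemma is_iso_tens {X X' Y Y' : M} {f : hom X X'} {g : hom Y Y'} :
  is_iso f -> is_iso g -> is_iso (f ⊗ g).
Proof.
  intros [f' [Hf1 Hf2]] [g' [Hg1 Hg2]]. exists (f' ⊗ g').
  split; apply tens_inv; assumption.
Qed.

Lemma is_iso_assoc (X Y Z : M) : is_iso (assoc X Y Z).
Proof. exists (assoc_inv X Y Z). split; [apply assoc_inv_l | apply assoc_inv_r]. Qed.

Lemma is_iso_runit (X : M) : is_iso (runit X).
Proof. exists (runit_inv X). split; [apply runit_inv_l | apply runit_inv_r]. Qed.

Lemma is_iso_runit_inv (X : M) : is_iso (runit_inv X).
Proof. exists (runit X). split; [apply runit_inv_r | apply runit_inv_l]. Qed.

Lemma is_iso_split_mono {X Y : M} (f : hom X Y) : is_iso f -> split_mono f.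
Proof. intros [g [Hg _]]. exists g. exact Hg. Qed.

Lemma split_mono_comp {X Y Z : M} {f : hom X Y} {g : hom Y Z} :
  split_mono f -> split_mono g -> split_mono (g ∘ f).
Proof.
  intros [f' Hf] [g' Hg]. exists (f' ∘ g'). rewrite <- comp_assoc, (id_reassoc Hg). exact Hf.
Qed.

Lemma split_mono_tens_l {X Y : M} (Z : M) (f : hom X Y) :
  split_mono f -> split_mono (f ⊗ idm Z).
Proof. intros [g Hg]. exists (g ⊗ idm Z). apply tens_id_inv, Hg. Qed.

Lemma is_iso_of_retraction {X Y : M} (f : hom X Y) (L : hom Y X) :
  L ∘ f = idm X -> split_mono L -> is_iso f.
Proof.
  intros HL [K HK]. exists L. split; [exact HL |].
  rewrite (left_inv_eq_right_inv HK HL), HK. reflexivity.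
Qed.

Lemma assoc_inv_nat {X X' Y Y' Z Z' : M} (f : hom X X') (g : hom Y Y') (h : hom Z Z') :
  assoc_inv X' Y' Z' ∘ (f ⊗ (g ⊗ h)) = ((f ⊗ g) ⊗ h) ∘ assoc_inv X Y Z.
Proof.
  symmetry. eapply square_inv; [apply assoc_inv_l | apply assoc_inv_r | apply assoc_nat].
Qed.

Lemma tens_assoc_conj {X X' Y Y' Z Z' : M} (f : hom X X') (g : hom Y Y') (h : hom Z Z') :
  (f ⊗ g) ⊗ h = assoc_inv X' Y' Z' ∘ (f ⊗ (g ⊗ h)) ∘ assoc X Y Z.
Proof. rewrite <- assoc_nat, (id_reassoc (assoc_inv_l _ _ _)). reflexivity. Qed.

Lemma runit_inv_nat {X Y : M} (f : hom X Y) :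
  runit_inv Y ∘ f = (f ⊗ idm unit) ∘ runit_inv X.
Proof.
  symmetry. eapply square_inv; [apply runit_inv_l | apply runit_inv_r | apply runit_nat].
Qed.

Lemma tens_unit_inj {X Y : M} (x y : hom X Y) : x ⊗ idm unit = y ⊗ idm unit -> x = y.
Proof.
  intro E. rewrite <- (comp_id_r x), <- (comp_id_r y), <- (runit_inv_r X), !comp_assoc.
  rewrite <- !runit_nat, E. reflexivity.
Qed.

Lemma runit_tens (X Y : M) : (idm X ⊗ runit Y) ∘ assoc X Y unit = runit (tens X Y).
Proof.
  apply tens_unit_inj. rewrite <- triangle.
  rewrite tens_comp_l, tens_assoc_conj, <- triangle, tens_comp_r, <- !comp_assoc, <- pentagon.
  rewrite (comp_assoc (assoc (tens X Y) unit unit)), <- assoc_nat, tens_id.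
  rewrite comp_assoc, comp_assoc, assoc_inv_l, comp_id_l. reflexivity.
Qed.

Lemma runit_inv_tens (X Y : M) :
  assoc_inv X Y unit ∘ (idm X ⊗ runit_inv Y) = runit_inv (tens X Y).
Proof.
  apply (left_inv_eq_right_inv (x := runit (tens X Y))); [apply runit_inv_l |].
  rewrite <- runit_tens, <- comp_assoc, (id_reassoc (assoc_inv_r _ _ _)).
  apply id_tens_inv, runit_inv_r.
Qed.

Lemma runit_inv_tens_l (Y A : M) :
  runit_inv Y ⊗ idm A = assoc_inv Y unit A ∘ (idm Y ⊗ lunit_inv A).
Proof.
  symmetry. apply (left_inv_eq_right_inv (x := runit Y ⊗ idm A)).
  - apply tens_id_inv, runit_inv_l.
  - rewrite <- triangle, <- comp_assoc, (id_reassoc (assoc_inv_r _ _ _)).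
    apply id_tens_inv, lunit_inv_r.
Qed.

Lemma pentagon_inv (Y A B C : M) :
  assoc (tens Y A) B C ∘ (assoc_inv Y A B ⊗ idm C)
  = assoc_inv Y A (tens B C) ∘ (idm Y ⊗ assoc A B C) ∘ assoc Y (tens A B) C.
Proof.
  rewrite <- (id_reassoc (assoc_inv_l Y A (tens B C)) (assoc (tens Y A) B C ∘ _)).
  f_equal. rewrite (reassoc (pentagon Y A B C)), <- !comp_assoc.
  rewrite (tens_id_inv (assoc_inv_r _ _ _)), comp_id_r. reflexivity.
Qed.

Section InvertiblePair.
Variables (P Q : M) (e : hom (tens P Q) unit) (e' : hom unit (tens P Q)).

Definition contract (Z : M) : hom (tens P (tens Q Z)) Z :=
  lunit Z ∘ (e ⊗ idm Z) ∘ assoc_inv P Q Z.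

Definition expand (Z : M) : hom Z (tens P (tens Q Z)) :=
  assoc P Q Z ∘ (e' ⊗ idm Z) ∘ lunit_inv Z.

Lemma contract_nat {Z W : M} (x : hom Z W) :
  contract W ∘ (idm P ⊗ (idm Q ⊗ x)) = x ∘ contract Z.
Proof.
  unfold contract. rewrite <- !comp_assoc, assoc_inv_nat, tens_id.
  rewrite (reassoc (eq_sym (tens_interchange e x))), <- comp_assoc.
  rewrite (reassoc (lunit_nat x)), <- comp_assoc. reflexivity.
Qed.

Hypothesis e_inv_r : e ∘ e' = idm unit.

Lemma contract_expand (Z : M) : contract Z ∘ expand Z = idm Z.
Proof.
  unfold contract, expand. rewrite <- !comp_assoc, (id_reassoc (assoc_inv_l _ _ _)).
  rewrite (id_reassoc (tens_id_inv e_inv_r)). apply lunit_inv_r.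
Qed.

Lemma tens_inj {Z W : M} (x y : hom Z W) : idm Q ⊗ x = idm Q ⊗ y -> x = y.
Proof.
  intro E. rewrite <- (comp_id_r x), <- (contract_expand Z), comp_assoc, <- contract_nat.
  rewrite E, contract_nat, <- comp_assoc, contract_expand, comp_id_r. reflexivity.
Qed.

Hypothesis e_inv_l : e' ∘ e = idm (tens P Q).

Lemma expand_contract (Z : M) : expand Z ∘ contract Z = idm (tens P (tens Q Z)).
Proof.
  unfold contract, expand. rewrite <- !comp_assoc, (id_reassoc (lunit_inv_l _)).
  rewrite (id_reassoc (tens_id_inv e_inv_l)). apply assoc_inv_r.
Qed.

Lemma tens_tens_conj {Z W : M} (x : hom Z W) :
  idm P ⊗ (idm Q ⊗ x) = expand W ∘ x ∘ contract Z.
Proof. rewrite <- contract_nat, (id_reassoc (expand_contract W)). reflexivity. Qed.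

Lemma is_iso_contract (Z : M) : is_iso (contract Z).
Proof. exists (expand Z). split; [apply expand_contract | apply contract_expand]. Qed.

Lemma is_iso_expand (Z : M) : is_iso (expand Z).
Proof. exists (contract Z). split; [apply contract_expand | apply expand_contract]. Qed.
End InvertiblePair.

Arguments contract {P Q} e Z.
Arguments expand {P Q} e' Z.
Arguments contract_expand {P Q e e'} _ Z.
Arguments expand_contract {P Q e e'} _ Z.
Arguments tens_inj {P Q e e'} _ {Z W} x y.
Arguments tens_tens_conj {P Q e e'} _ {Z W} x.
Arguments is_iso_contract {P Q e e'} _ _ Z.
Arguments is_iso_expand {P Q e e'} _ _ Z.

Section InvertibleObject.
Variables (A B : M) (u : hom (tens A B) unit) (u' : hom unit (tens A B))
  (v : hom (tens B A) unit) (v' : hom unit (tens B A)).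
Hypotheses (u_inv_r : u ∘ u' = idm unit)
  (v_inv_r : v ∘ v' = idm unit) (v_inv_l : v' ∘ v = idm (tens B A)).

(* [A ⊗ -] is full: conjugation by [B ⊗ A ≅ I] identifies [B ⊗ (A ⊗ -)] with the
   identity, and [A ⊗ B ≅ I] makes [B ⊗ -] faithful. *)
Definition untens {C D : M} (psi : hom (tens A C) (tens A D)) : hom C D :=
  contract v D ∘ (idm B ⊗ psi) ∘ expand v' C.

Lemma tens_untens {C D : M} (psi : hom (tens A C) (tens A D)) : idm A ⊗ untens psi = psi.
Proof.
  apply (tens_inj u_inv_r). unfold untens.
  rewrite (tens_tens_conj v_inv_l), <- !comp_assoc, (id_reassoc (expand_contract v_inv_l _)).
  rewrite (expand_contract v_inv_l), comp_id_r. reflexivity.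
Qed.

Lemma is_iso_untens {C D : M} (psi : hom (tens A C) (tens A D)) :
  is_iso psi -> is_iso (untens psi).
Proof.
  intro Hpsi. unfold untens.
  exact (is_iso_comp (is_iso_comp (is_iso_expand v_inv_r v_inv_l C)
    (is_iso_tens (is_iso_idm B) Hpsi)) (is_iso_contract v_inv_r v_inv_l D)).
Qed.
End InvertibleObject.

Arguments untens {A B} v v' {C D} psi.
Arguments tens_untens {A B u u' v v'} _ _ {C D} psi.
Arguments is_iso_untens {A B v v'} _ _ {C D psi} _.

Lemma expand_coherence (Y A B Z : M) (e' : hom unit (tens A B)) :
  assoc (tens Y A) B Z ∘ ((assoc_inv Y A B ∘ (idm Y ⊗ e') ∘ runit_inv Y) ⊗ idm Z)
  = assoc_inv Y A (tens B Z) ∘ (idm Y ⊗ expand e' Z).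
Proof.
  unfold expand. rewrite !tens_comp_l, !tens_comp_r, runit_inv_tens_l.
  rewrite (reassoc (pentagon_inv Y A B Z)), <- !comp_assoc.
  rewrite (reassoc (eq_sym (assoc_inv_nat (idm Y) e' (idm Z)))), <- !comp_assoc.
  rewrite (id_reassoc (assoc_inv_r _ _ _)). reflexivity.
Qed.

Definition Pinv {X Y A B : M} (f' : hom (tens Y A) X) (u' : hom unit (tens A B)) :
  hom Y (tens X B) :=
  (f' ⊗ idm B) ∘ assoc_inv Y A B ∘ (idm Y ⊗ u') ∘ runit_inv Y.

Lemma Pcomp_Pinv_r {X Y A B : M} (f : hom X (tens Y A)) (f' : hom (tens Y A) X)
  (u : hom (tens A B) unit) (u' : hom unit (tens A B)) :
  f ∘ f' = idm (tens Y A) -> u ∘ u' = idm unit ->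
  (idm Y ⊗ u) ∘ Pcomp (Pinv f' u') f = Pid Y.
Proof.
  intros Hf Hu. unfold Pcomp, Pinv, Pid.
  rewrite (id_reassoc (tens_id_inv Hf)), (id_reassoc (assoc_inv_r _ _ _)).
  apply (id_reassoc (id_tens_inv Hu)).
Qed.

Lemma Pcomp_Pinv_l {X Y A B : M} (f : hom X (tens Y A)) (f' : hom (tens Y A) X)
  (u' : hom unit (tens A B)) (al : hom (tens B A) unit) :
  f' ∘ f = idm X -> (idm A ⊗ al) ∘ expand u' A = runit_inv A ->
  (idm X ⊗ al) ∘ Pcomp f (Pinv f' u') = Pid X.
Proof.
  intros Hf Hal. unfold Pcomp, Pinv, Pid.
  rewrite tens_comp_l, <- comp_assoc, (reassoc (assoc_nat f' (idm B) (idm A))), tens_id.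
  rewrite <- comp_assoc, (reassoc (tens_interchange f' al)), <- !comp_assoc.
  rewrite (reassoc (expand_coherence Y A B A u')), <- !comp_assoc.
  rewrite <- (tens_id Y A), (reassoc (eq_sym (assoc_inv_nat (idm Y) (idm A) al))).
  rewrite <- !comp_assoc, (reassoc (eq_sym (tens_comp_r Y _ _))), Hal.
  rewrite (reassoc (runit_inv_tens Y A)), (reassoc (eq_sym (runit_inv_nat f'))).
  rewrite <- comp_assoc, Hf. apply comp_id_r.
Qed.

Lemma Pcomp_equiv_Pid_retraction {X Y A B : M}
  {f : hom X (tens Y A)} {g : hom Y (tens X B)} :
  Pequiv (Pcomp f g) (Pid X) -> exists s, is_iso s /\ s ∘ (g ⊗ idm A) ∘ f = idm X.
Proof.
  intros [al [Hal E]]. exists (runit X ∘ (idm X ⊗ al) ∘ assoc X B A). split.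
  - exact (is_iso_comp (is_iso_comp (is_iso_assoc X B A) (is_iso_tens (is_iso_idm X) Hal))
      (is_iso_runit X)).
  - unfold Pcomp, Pid in E. rewrite <- !comp_assoc, E. apply runit_inv_r.
Qed.

Lemma P_is_iso_is_iso {X Y A : M} (f : hom X (tens Y A)) : P_is_iso f -> is_iso f.
Proof.
  intros [B [g [_ [Hfg Hgf]]]].
  destruct (Pcomp_equiv_Pid_retraction Hfg) as [s [Hs Es]].
  destruct (Pcomp_equiv_Pid_retraction Hgf) as [t [_ Et]].
  apply (is_iso_of_retraction f (s ∘ (g ⊗ idm A))).
  - rewrite <- comp_assoc. exact Es.
  - apply split_mono_comp; [apply split_mono_tens_l | apply is_iso_split_mono, Hs].
    exists (t ∘ (f ⊗ idm B)). rewrite <- comp_assoc. exact Et.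
Qed.

Lemma is_iso_P_is_iso {X Y A : M} (f : hom X (tens Y A)) :
  weakly_invertible A -> is_iso f -> P_is_iso f.
Proof.
  intros [B [u [v [[u' [Hu_l Hu_r]] [v' [Hv_l Hv_r]]]]]] [f' [Hf_l Hf_r]].
  pose (psi := runit_inv A ∘ contract u A).
  assert (Hpsi : is_iso psi)
    by exact (is_iso_comp (is_iso_contract Hu_r Hu_l A) (is_iso_runit_inv A)).
  exists B, (Pinv f' u'). split; [| split].
  - exists A, v, u. split; [exists v' | exists u']; split; assumption.
  - exists (untens v v' psi). split; [exact (is_iso_untens Hv_r Hv_l Hpsi) |].
    apply Pcomp_Pinv_l; [exact Hf_l |].
    rewrite (tens_untens Hu_r Hv_l). unfold psi.
    rewrite <- comp_assoc, (contract_expand Hu_r). apply comp_id_r.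
  - exists u. split; [exists u'; split; assumption |]. apply Pcomp_Pinv_r; assumption.
Qed.
End SymMonCatFacts.

Theorem lemma3p6 (M : SymMonCat) :
  (forall (X Y A : M) (f : hom X (tens Y A)),
      weakly_invertible A -> (P_is_iso f <-> is_iso f)) /\
  (forall (X Y : M) (f : hom X Y), P_is_iso (pi_mor f) -> is_iso f).
Proof.
  split.
  - intros X Y A f HA. split; [apply P_is_iso_is_iso | apply is_iso_P_is_iso, HA].
  - intros X Y f Hf. apply P_is_iso_is_iso in Hf. unfold pi_mor in Hf.
    rewrite <- (id_reassoc (runit_inv_r Y) f).
    exact (is_iso_comp Hf (is_iso_runit Y)).
Qed.
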